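(* Let $G=(V=[n],w)$ be a connected weighted graph. Then the fractional Cheeger constant $\tilde h_G$ is attained: there is a fractional partition $(\rho,\eta)$ of $V$ with $\|\rho\|\ne0$, $\|\eta\|\ne0$ and $\tilde h(G;\rho,\eta)=\tilde h_G$.
   Context: A weighted graph is a pair $(V,w)$ with $V=[n]=\{1,\dots,n\}$ and $w:V\times V\to[0,1]$ symmetric. It is loopless if $w(v,v)=0$ for all $v$. Put $\mathrm{vol}(v)=\sum_{u\in V}w(u,v)$ and $\mathrm{vol}(G)=\sum_v\mathrm{vol}(v)$. $G$ is connected if $\sum_{u\in S,v\notin S}w(u,v)>0$ for every $\emptyset\ne S\subsetneq V$. A fractional partition of $V$ is a pair $(\rho,\eta)$ of functions $V\to[0,1]$ with $\rho(u)+\eta(u)=1$ for all $u$; write $\|\rho\|=\sum_u\rho(u)\mathrm{vol}(u)$, $\|\eta\|=\sum_u\eta(u)\mathrm{vol}(u)$. When both are nonzero, $\tilde h(G;\rho,\eta)=\frac{\sum_{u,v\in V}\rho(u)\eta(v)w(u,v)}{\min\{\|\rho\|,\|\eta\|\}}$, and the fractional Cheeger constant is $\tilde h_G=\inf_{(\rho,\eta)}\tilde h(G;\rho,\eta)$ over all fractional partitions with $\|\rho\|,\|\eta\|\ne 0$. *)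

From Stdlib Require Import Reals List.
Import ListNotations.
Open Scope R_scope.

(* Vertex set V = [n] = {1,...,n}, represented by natural numbers 1..n.
   Functions on V are functions nat -> R (resp. nat -> nat -> R); only
   their values on [n] matter. *)
Definition inV (n : nat) (v : nat) : Prop := (1 <= v <= n)%nat.

Definition sumV (n : nat) (f : nat -> R) : R :=
  fold_right Rplus 0 (map f (seq 1 n)).

Definition weighted_graph (n : nat) (w : nat -> nat -> R) : Prop :=
  (forall u v, inV n u -> inV n v -> 0 <= w u v <= 1) /\
  (forall u v, inV n u -> inV n v -> w u v = w v u).

Definition vol (n : nat) (w : nat -> nat -> R) (v : nat) : R :=
  sumV n (fun u => w u v).

Definition volG (n : nat) (w : nat -> nat -> R) : R :=
  sumV n (fun v => vol n w v).

Definition connected (n : nat) (w : nat -> nat -> R) : Prop :=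
  forall S : nat -> Prop,
    (exists u, inV n u /\ S u) ->
    (exists v, inV n v /\ ~ S v) ->
    exists u v, inV n u /\ S u /\ inV n v /\ ~ S v /\ 0 < w u v.

Definition frac_partition (n : nat) (rho eta : nat -> R) : Prop :=
  forall u, inV n u -> 0 <= rho u <= 1 /\ 0 <= eta u <= 1 /\ rho u + eta u = 1.

Definition fnorm (n : nat) (w : nat -> nat -> R) (rho : nat -> R) : R :=
  sumV n (fun u => rho u * vol n w u).

Definition admissible (n : nat) (w : nat -> nat -> R) (rho eta : nat -> R) : Prop :=
  frac_partition n rho eta /\ fnorm n w rho <> 0 /\ fnorm n w eta <> 0.

Definition htilde (n : nat) (w : nat -> nat -> R) (rho eta : nat -> R) : R :=
  sumV n (fun u => sumV n (fun v => rho u * eta v * w u v))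
  / Rmin (fnorm n w rho) (fnorm n w eta).

Definition htilde_values (n : nat) (w : nat -> nat -> R) : R -> Prop :=
  fun x => exists rho eta, admissible n w rho eta /\ x = htilde n w rho eta.

Definition is_lower_bound (E : R -> Prop) (m : R) : Prop :=
  forall x, E x -> m <= x.
Definition is_glb (E : R -> Prop) (m : R) : Prop :=
  is_lower_bound E m /\ (forall b, is_lower_bound E b -> b <= m).
Definition is_frac_cheeger (n : nat) (w : nat -> nat -> R) (x : R) : Prop :=
  is_glb (htilde_values n w) x.

From Pilot Require Import Defs.
(* For f : V -> [0,1] write m(f) = min(||f||, ||1 - f||).  The quotient
   h(f) = cut(f, 1 - f) / m(f) is continuous wherever m(f) > 0, so it is only the
   boundary of the cube [0,1]^V, where one side has small volume, that could keep the
   infimum from being attained.  But cut(f, 1 - f) = ||f|| - cut(f, f) and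
   cut(f, f) <= K ||f||^2, so h(f) >= 1 - K m(f) >= 3/4 once m(f) <= 1/(4K), whereas
   the constant partition 1/2 has h = 1/2.  Hence the infimum is the minimum of h over
   the compact set {m >= c} for a small c > 0, which exists by Tychonoff's theorem and
   the extreme value theorem. *)
From Stdlib Require Import Reals List Lia Lra.
From mathcomp Require Import all_boot all_order all_algebra.
From mathcomp Require Import all_classical all_reals all_analysis.
From mathcomp Require Import Rstruct Rstruct_topology.
Import Order.TTheory GRing.Theory Num.Theory numFieldNormedType.Exports.
Import ArrowAsProduct.
(* Undo the shadowing of [Defs.connected] by the topological [connected]. *)
Import Defs.

Set Implicit Arguments.
Unset Strict Implicit.

Open Scope R_scope.

Definition lsum (l : list nat) (f : nat -> R) : R := fold_right Rplus 0 (List.map f l).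

Lemma lsum_ext l f g : (forall x, In x l -> f x = g x) -> lsum l f = lsum l g.
Proof.
elim: l => //= a l IH fg; rewrite /lsum /= fg; last by left.
by rewrite -/(lsum l f) IH // => x lx; apply: fg; right.
Qed.

Lemma lsum_plus l f g : lsum l (fun x => f x + g x) = lsum l f + lsum l g.
Proof. by rewrite /lsum; elim: l => [|a l IH] /=; lra. Qed.

Lemma lsum_minus l f g : lsum l (fun x => f x - g x) = lsum l f - lsum l g.
Proof. by rewrite /lsum; elim: l => [|a l IH] /=; lra. Qed.

Lemma lsum_scal l a f : lsum l (fun x => a * f x) = a * lsum l f.
Proof. by rewrite /lsum; elim: l => [|b l IH] /=; lra. Qed.

Lemma lsum_le l f g : (forall x, In x l -> f x <= g x) -> lsum l f <= lsum l g.
Proof.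
elim: l => [|a l IH] fg; rewrite /lsum /=; first lra.
apply: Rplus_le_compat; first by apply: fg; left.
by apply: IH => x lx; apply: fg; right.
Qed.

Lemma lsum_ge0 l f : (forall x, In x l -> 0 <= f x) -> 0 <= lsum l f.
Proof.
move=> f0; have -> : 0 = lsum l (fun _ => 0) by rewrite /lsum; elim: l {f0} => //= a l <-; lra.
exact: lsum_le.
Qed.

Lemma lsum_term l f y : (forall x, In x l -> 0 <= f x) -> In y l -> f y <= lsum l f.
Proof.
elim: l => [|a l IH] f0 //= [<-|ly]; rewrite /lsum /=.
- have : 0 <= lsum l f by apply: lsum_ge0 => x lx; apply: f0; right.
  rewrite /lsum; lra.
- have : 0 <= f a by apply: f0; left.
  have : f y <= lsum l f by apply: IH => // x lx; apply: f0; right.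
  rewrite /lsum; lra.
Qed.

Lemma lsum_swap l l' (F : nat -> nat -> R) :
  lsum l (fun u => lsum l' (F u)) = lsum l' (fun v => lsum l (fun u => F u v)).
Proof.
elim: l => [|a l IH].
  by rewrite /lsum /=; elim: l' => //= b l' IH; rewrite -IH; lra.
by rewrite [LHS]/lsum /= -/(lsum _ _) IH -lsum_plus.
Qed.

Section RealContinuity.

Variable T : topologicalType.
Implicit Types f g : T -> R.

Lemma continuous_Rplus f g :
  continuous f -> continuous g -> continuous (fun x => f x + g x).
Proof. by move=> cf cg x; exact: (@continuousD _ R^o _ f g x (cf x) (cg x)). Qed.

Lemma continuous_Rminus f g :
  continuous f -> continuous g -> continuous (fun x => f x - g x).
Proof. by move=> cf cg x; exact: (@continuousB _ R^o _ f g x (cf x) (cg x)). Qed.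

Lemma continuous_Rmult f g :
  continuous f -> continuous g -> continuous (fun x => f x * g x).
Proof. by move=> cf cg x; exact: (@continuousM R T f g x (cf x) (cg x)). Qed.

Lemma continuous_Rinv f :
  continuous f -> (forall x, f x <> 0) -> continuous (fun x => / f x).
Proof. by move=> cf f0 x; exact: (@continuousV R T f x (introN eqP (f0 x)) (cf x)). Qed.

Lemma continuous_Rmin f g :
  continuous f -> continuous g -> continuous (fun x => Rmin (f x) (g x)).
Proof.
move=> cf cg; have -> : (fun x => Rmin (f x) (g x)) = (f \min g :> (T -> R^o)).
  by apply: funext => x; rewrite RminE.
by move=> x; exact: (@continuous_min R T f g x (cf x) (cg x)).
Qed.

Lemma continuous_Rmax f g :
  continuous f -> continuous g -> continuous (fun x => Rmax (f x) (g x)).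
Proof.
move=> cf cg; have -> : (fun x => Rmax (f x) (g x)) = (f \max g :> (T -> R^o)).
  by apply: funext => x; rewrite RmaxE.
by move=> x; exact: (@continuous_max R T f g x (cf x) (cg x)).
Qed.

Lemma continuous_lsum l (F : nat -> T -> R) : (forall u, continuous (F u)) ->
  continuous (fun x => lsum l (fun u => F u x)).
Proof.
move=> cF; elim: l => [|a l IH]; first exact: cst_continuous.
exact: (continuous_Rplus (cF a) IH).
Qed.

End RealContinuity.

Definition unit_cube (I : Type) (f : I -> R) : Prop := forall i, 0 <= f i <= 1.

Lemma unit_cube_argmin (I : eqType) (F P : (I -> R) -> R) (c : R) :
  continuous F -> continuous P -> (exists g, unit_cube g /\ c <= P g) ->
  exists f0, unit_cube f0 /\ c <= P f0 /\
    forall f, unit_cube f -> c <= P f -> F f0 <= F f.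
Proof.
move=> cF cP [g [g01 Pg]].
pose S := ([set f : I -> R | forall i, `[0%R, 1%R] (f i)] `&`
  (P @^-1` [set x | (c <= x)%R]))%classic.
have inS f : unit_cube f -> c <= P f -> S f.
  move=> f01 Pf; split => [i|] /=; last exact/RleP.
  by rewrite in_itv /=; case: (f01 i) => f0 f1; apply/andP; split; apply/RleP.
have S_compact : compact S.
  apply: compact_closedI; first exact: (tychonoff (fun=> @segment_compact R 0%R 1%R)).
  by apply: preimage_closed; [move=> x _; exact: cP | exact: closed_ge].
have [f0 f0S f0_min] :=
  compact_EVT_min (ex_intro _ g (inS g g01 Pg)) S_compact (continuous_subspaceT cF).
move: f0S; rewrite inE => -[/= f0_01 Pf0].
exists f0; split; [|split].
- by move=> i; move: (f0_01 i); rewrite in_itv /= => /andP[/RleP ? /RleP ?].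
- exact/RleP.
- by move=> f f01 Pf; apply/RleP/f0_min; rewrite inE; apply: inS.
Qed.

Lemma inV_In n v : inV n v <-> In v (List.seq 1 n).
Proof. by rewrite in_seq /inV; lia. Qed.

Definition compl (f : nat -> R) : nat -> R := fun u => 1 - f u.

Definition half : nat -> R := fun _ => / 2.

Lemma compl_half u : compl half u = half u.
Proof. by rewrite /compl /half; field. Qed.

Lemma attained_is_glb (E : R -> Prop) m : E m -> is_lower_bound E m -> is_glb E m.
Proof. by move=> Em lb; split=> // b; apply. Qed.

Section WeightedGraph.

Variables (n : nat) (w : nat -> nat -> R).
Hypothesis graph_w : weighted_graph n w.

Lemma sumV_ext f g : (forall x, inV n x -> f x = g x) -> sumV n f = sumV n g.
Proof. by move=> fg; apply: lsum_ext => x /inV_In; apply: fg. Qed.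

Lemma sumV_le f g : (forall x, inV n x -> f x <= g x) -> sumV n f <= sumV n g.
Proof. by move=> fg; apply: lsum_le => x /inV_In; apply: fg. Qed.

Lemma sumV_ge0 f : (forall x, inV n x -> 0 <= f x) -> 0 <= sumV n f.
Proof. by move=> f0; apply: lsum_ge0 => x /inV_In; apply: f0. Qed.

Lemma sumV_term f y : (forall x, inV n x -> 0 <= f x) -> inV n y -> f y <= sumV n f.
Proof. by move=> f0 /inV_In; apply: lsum_term => x /inV_In; apply: f0. Qed.

Lemma sumV_scal a f : sumV n (fun x => a * f x) = a * sumV n f.
Proof. exact: lsum_scal. Qed.

Lemma sumV_minus f g : sumV n (fun x => f x - g x) = sumV n f - sumV n g.
Proof. exact: lsum_minus. Qed.

Lemma sumV_swap (F : nat -> nat -> R) :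
  sumV n (fun u => sumV n (F u)) = sumV n (fun v => sumV n (fun u => F u v)).
Proof. exact: lsum_swap. Qed.

Lemma w_ge0 u v : inV n u -> inV n v -> 0 <= w u v.
Proof. by move=> Vu Vv; case: (graph_w.1 u v Vu Vv). Qed.

Lemma wC u v : inV n u -> inV n v -> w u v = w v u.
Proof. exact: graph_w.2. Qed.

Lemma vol_ge0 u : inV n u -> 0 <= vol n w u.
Proof. by move=> Vu; apply: sumV_ge0 => x Vx; apply: w_ge0. Qed.

Lemma w_le_vol u v : inV n u -> inV n v -> w u v <= vol n w u.
Proof.
move=> Vu Vv; rewrite wC //; apply: (sumV_term (f := fun x => w x u)) => // x Vx.
exact: w_ge0.
Qed.

Lemma fnorm_ge0 f : (forall u, inV n u -> 0 <= f u) -> 0 <= fnorm n w f.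
Proof.
by move=> f0; apply: sumV_ge0 => u Vu; apply: Rmult_le_pos; [apply: f0 | apply: vol_ge0].
Qed.

Lemma fnorm_ext f g : (forall u, inV n u -> f u = g u) -> fnorm n w f = fnorm n w g.
Proof. by move=> fg; apply: sumV_ext => u Vu; rewrite fg. Qed.

Definition cut (a b : nat -> R) : R :=
  sumV n (fun u => sumV n (fun v => a u * b v * w u v)).

Lemma cut_ext a b a' b' : (forall u, inV n u -> a u = a' u) ->
  (forall u, inV n u -> b u = b' u) -> cut a b = cut a' b'.
Proof.
by move=> aa bb; apply: sumV_ext => u Vu; apply: sumV_ext => v Vv; rewrite aa ?bb.
Qed.

Lemma cutC a b : cut a b = cut b a.
Proof.
rewrite /cut sumV_swap.
by apply: sumV_ext => v Vv; apply: sumV_ext => u Vu; rewrite wC //; ring.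
Qed.

Lemma cut_compl a : cut a (compl a) = fnorm n w a - cut a a.
Proof.
rewrite /cut /fnorm -sumV_minus; apply: sumV_ext => u Vu.
have -> : vol n w u = sumV n (fun v => w u v) by apply: sumV_ext => v Vv; rewrite wC.
rewrite -sumV_scal -sumV_minus; apply: sumV_ext => v _; rewrite /compl; ring.
Qed.

Lemma inv_vol_ge0 v : inV n v -> 0 <= / vol n w v.
Proof.
move=> Vv; case: (Rle_lt_or_eq_dec _ _ (vol_ge0 Vv)) => [vol_pos | <-].
- exact/Rlt_le/Rinv_0_lt_compat.
- by rewrite Rinv_0; apply: Rle_refl.
Qed.

(* Since [/ 0 = 0], vertices of volume zero contribute nothing to [Kvol]. *)
Definition Kvol : R := 1 + sumV n (fun v => / vol n w v).

Lemma Kvol_pos : 0 < Kvol.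
Proof. by have := sumV_ge0 inv_vol_ge0; rewrite /Kvol; lra. Qed.

Lemma w_le_Kvol u v : inV n u -> inV n v -> w u v <= Kvol * vol n w u * vol n w v.
Proof.
move=> Vu Vv; have Kpos := Kvol_pos; have volu := vol_ge0 Vu.
have wv : w u v <= vol n w v by rewrite wC //; apply: w_le_vol.
case: (Rle_lt_or_eq_dec _ _ (vol_ge0 Vv)) => [vol_pos | vol0]; last first.
  by rewrite -vol0 in wv *; nra.
have inv_le : / vol n w v <= Kvol.
  have := sumV_term inv_vol_ge0 Vv; rewrite /Kvol; lra.
have -> : Kvol * vol n w u * vol n w v = vol n w u * (Kvol * vol n w v) by ring.
apply: Rle_trans (w_le_vol Vu Vv) _.
have : 1 <= Kvol * vol n w v.
  by rewrite -(Rinv_l (vol n w v)); [nra | lra].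
nra.
Qed.

Lemma cut_self_le a : (forall u, inV n u -> 0 <= a u) ->
  cut a a <= Kvol * fnorm n w a * fnorm n w a.
Proof.
move=> a0; have -> : Kvol * fnorm n w a * fnorm n w a =
    sumV n (fun u => Kvol * fnorm n w a * (a u * vol n w u)) by rewrite sumV_scal.
apply: sumV_le => u Vu.
have -> : Kvol * fnorm n w a * (a u * vol n w u) =
    sumV n (fun v => Kvol * (a u * vol n w u) * (a v * vol n w v)).
  by rewrite sumV_scal /fnorm; ring.
apply: sumV_le => v Vv; have := w_le_Kvol Vu Vv.
have := Rmult_le_pos _ _ (a0 u Vu) (a0 v Vv); nra.
Qed.

Lemma cut_compl_ge f : (forall u, inV n u -> 0 <= f u <= 1) ->
  let m := Rmin (fnorm n w f) (fnorm n w (compl f)) in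
  m - Kvol * m * m <= cut f (compl f).
Proof.
move=> f01 m.
have f0 u : inV n u -> 0 <= f u by move=> /f01; lra.
have g0 u : inV n u -> 0 <= compl f u by move=> /f01; rewrite /compl; lra.
have ff := cut_self_le f0; have gg := cut_self_le g0.
have fg : cut f (compl f) = cut (compl f) (compl (compl f)).
  by rewrite cutC; apply: cut_ext => // u _; rewrite /compl; ring.
rewrite /m /Rmin; case: Rle_dec => _.
- by rewrite cut_compl; lra.
- by rewrite fg cut_compl; lra.
Qed.

Lemma htilde_compl_ge f : (forall u, inV n u -> 0 <= f u <= 1) ->
  0 < Rmin (fnorm n w f) (fnorm n w (compl f)) ->
  Rmin (fnorm n w f) (fnorm n w (compl f)) <= / (4 * Kvol) ->
  3 / 4 <= htilde n w f (compl f).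
Proof.
move=> f01 m_pos m_small; have := cut_compl_ge f01.
rewrite /htilde -/(cut _ _); set m := Rmin _ _ in m_pos m_small * => lb.
have Km : Kvol * m <= / 4.
  have := Rmult_le_compat_l _ _ _ (Rlt_le _ _ Kvol_pos) m_small.
  have -> : Kvol * / (4 * Kvol) = / 4 by field; have := Kvol_pos; lra.
  done.
apply: (Rmult_le_reg_r m) => //.
have -> : cut f (compl f) / m * m = cut f (compl f) by field; lra.
nra.
Qed.

Lemma admissible_complE f : (forall u, inV n u -> 0 <= f u <= 1) ->
  admissible n w f (compl f) <-> 0 < Rmin (fnorm n w f) (fnorm n w (compl f)).
Proof.
move=> f01; have A0 : 0 <= fnorm n w f by apply: fnorm_ge0 => u /f01; lra.
have B0 : 0 <= fnorm n w (compl f) by apply: fnorm_ge0 => u /f01; rewrite /compl; lra.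
split => [[_ [A1 B1]] | m_pos]; first by apply: Rmin_glb_lt; lra.
have := Rmin_l (fnorm n w f) (fnorm n w (compl f)).
have := Rmin_r (fnorm n w f) (fnorm n w (compl f)).
split; [move=> u /f01; rewrite /compl | split]; lra.
Qed.

Lemma fnorm_half : fnorm n w half = volG n w / 2.
Proof. by rewrite /fnorm /half sumV_scal /Rdiv Rmult_comm. Qed.

Lemma fnorm_compl_half : fnorm n w (compl half) = volG n w / 2.
Proof. by rewrite -fnorm_half; apply: fnorm_ext => u _; rewrite compl_half. Qed.

Lemma htilde_half : 0 < volG n w -> htilde n w half (compl half) = / 2.
Proof.
move=> vol_pos; have C : cut half (compl half) = volG n w / 4.
  have := cut_compl half; rewrite fnorm_half (@cut_ext _ _ half half) // => [|u _].
    lra.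
  exact: compl_half.
rewrite /htilde -/(cut _ _) fnorm_half fnorm_compl_half C Rmin_left.
  by field; apply: Rgt_not_eq.
exact: Rle_refl.
Qed.

(* A fractional partition is only constrained on V; clamping to [0,1] moves it into the
   cube without changing anything on V. *)
Definition clamp01 (x : R) : R := Rmax 0 (Rmin 1 x).

Lemma clamp01_bounds x : 0 <= clamp01 x <= 1.
Proof.
rewrite /clamp01; split; first exact: Rmax_l.
by apply: Rmax_lub; [lra | apply: Rmin_l].
Qed.

Lemma clamp01_id x : 0 <= x <= 1 -> clamp01 x = x.
Proof. by move=> x01; rewrite /clamp01 Rmin_right ?Rmax_right; lra. Qed.

Lemma admissible_clamp rho eta : admissible n w rho eta ->
  let f := fun u => clamp01 (rho u) in
  admissible n w f (compl f) /\ htilde n w rho eta = htilde n w f (compl f).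
Proof.
move=> [part [A0 B0]] f.
have rho_f u : inV n u -> rho u = f u by move=> /part [r01 _]; rewrite /f clamp01_id.
have eta_f u : inV n u -> eta u = compl f u.
  by move=> Vu; have [_ [_ e]] := part u Vu; rewrite /compl -rho_f //; lra.
rewrite /htilde -!/(cut _ _) (cut_ext rho_f eta_f) (fnorm_ext rho_f) (fnorm_ext eta_f).
split => //; split; last by rewrite -(fnorm_ext rho_f) -(fnorm_ext eta_f).
by move=> u _; have := clamp01_bounds (rho u); rewrite /compl -/(f u); lra.
Qed.

(* Capping the denominator below by [c > 0] makes the quotient continuous on the whole
   cube; it agrees with [htilde] on the constraint set [c <= m(f)]. *)
Definition capped_htilde (c : R) (f : nat -> R) : R :=
  cut f (compl f) / Rmax c (Rmin (fnorm n w f) (fnorm n w (compl f))).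

Lemma capped_htildeE c f : c <= Rmin (fnorm n w f) (fnorm n w (compl f)) ->
  capped_htilde c f = htilde n w f (compl f).
Proof. by move=> cm; rewrite /capped_htilde Rmax_right. Qed.

Lemma continuous_coord u : continuous (fun f : nat -> R => f u).
Proof. exact: (@proj_continuous nat (fun=> R) u). Qed.

Lemma continuous_fnorm_compl : continuous (fun f => fnorm n w (compl f)).
Proof.
apply: (continuous_lsum (F := fun u f => (1 - f u) * vol n w u)) => u.
apply: continuous_Rmult; last exact: cst_continuous.
apply: continuous_Rminus; [exact: cst_continuous | exact: continuous_coord].
Qed.

Lemma continuous_min_fnorm :
  continuous (fun f => Rmin (fnorm n w f) (fnorm n w (compl f))).
Proof.
apply: continuous_Rmin continuous_fnorm_compl.
apply: (continuous_lsum (F := fun u f => f u * vol n w u)) => u.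
by apply: continuous_Rmult; [exact: continuous_coord | exact: cst_continuous].
Qed.

Lemma continuous_capped_htilde c : 0 < c -> continuous (capped_htilde c).
Proof.
move=> c_pos; apply: continuous_Rmult.
  apply: (continuous_lsum
    (F := fun u f => sumV n (fun v => f u * (1 - f v) * w u v))) => u.
  apply: (continuous_lsum (F := fun v f => f u * (1 - f v) * w u v)) => v.
  apply: continuous_Rmult; last exact: cst_continuous.
  apply: continuous_Rmult; first exact: continuous_coord.
  by apply: continuous_Rminus; [exact: cst_continuous | exact: continuous_coord].
apply: continuous_Rinv => [|f].
  by apply: continuous_Rmax; [exact: cst_continuous | exact: continuous_min_fnorm].
by have := Rmax_l c (Rmin (fnorm n w f) (fnorm n w (compl f))); lra.
Qed.

End WeightedGraph.

Theorem mainTheorem10 (n : nat) (w : nat -> nat -> R) :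
  weighted_graph n w ->
  connected n w ->
  0 < volG n w ->
  exists rho eta,
    admissible n w rho eta /\ is_frac_cheeger n w (htilde n w rho eta).
Proof.
move=> graph_w _ vol_pos; have K_pos := Kvol_pos graph_w.
pose c := Rmin (/ (4 * Kvol n w)) (volG n w / 2).
have c_pos : 0 < c by apply: Rmin_glb_lt; [apply: Rinv_0_lt_compat | ]; lra.
have c_half : c <= Rmin (fnorm n w half) (fnorm n w (compl half)).
  by rewrite fnorm_half fnorm_compl_half Rmin_left; [apply: Rmin_r | apply: Rle_refl].
have half01 : unit_cube half by move=> i; rewrite /half; lra.
have [f0 [f0_01 [c_f0 f0_min]]] :=
  unit_cube_argmin (continuous_capped_htilde (n := n) (w := w) c_pos)
    (continuous_min_fnorm (n := n) (w := w)) (ex_intro _ half (conj half01 c_half)).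
have adm0 : admissible n w f0 (compl f0).
  by apply: (admissible_complE graph_w (fun u _ => f0_01 u)).2; lra.
have f0_le_half : htilde n w f0 (compl f0) <= / 2.
  rewrite -(capped_htildeE c_f0) -(htilde_half graph_w vol_pos) -(capped_htildeE c_half).
  exact: f0_min.
exists f0, (compl f0); split => //.
apply: attained_is_glb => [|_ [rho [eta [adm ->]]]]; first by exists f0, (compl f0).
have [adm_f ->] := admissible_clamp adm; set f := fun u => clamp01 (rho u) in adm_f *.
have f01 : unit_cube f by move=> u; exact: clamp01_bounds.
case: (Rle_lt_dec c (Rmin (fnorm n w f) (fnorm n w (compl f)))) => [c_f | f_small].
  by rewrite -(capped_htildeE c_f) -(capped_htildeE c_f0); apply: f0_min.
have f_pos := (admissible_complE graph_w (fun u _ => f01 u)).1 adm_f.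
have f_small' := Rlt_le _ _ (Rlt_le_trans _ _ _ f_small (Rmin_l _ _)).
have := htilde_compl_ge graph_w (fun u _ => f01 u) f_pos f_small'; lra.
Qed.
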